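(* Let $a,b\in\mathbb{Z}$ with $\gcd(a,b)=1$ and $a^2+ab-b^2\not\equiv0\pmod5$. Let $m\ge1$ with $5\mid m$, and suppose $\{G_n(a,b)\}$ is complete mod $m$. Then $\{G_n(a,b)\}$ is complete mod $5m$.
   Context: For integers $a,b$ with $\gcd(a,b)=1$, the Gibonacci sequence $\{G_n(a,b)\}_{n\ge1}$ is defined by $G_1=a$, $G_2=b$, $G_{n+1}=G_{n-1}+G_n$. A sequence is complete mod $m$ if every residue class modulo $m$ contains some term of the sequence. *)

From Stdlib Require Import ZArith.
Open Scope Z_scope.

(* Gibonacci sequence, 1-indexed: gib a b 1 = a, gib a b 2 = b,
   gib a b (n+1) = gib a b (n-1) + gib a b n.  (gib a b 0 = a is a junk
   value; the completeness notion below only uses indices n >= 1.) *)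
Fixpoint gib_pair (a b : Z) (n : nat) : Z * Z :=
  match n with
  | O => (a, b)
  | S k => let (x, y) := gib_pair a b k in (y, x + y)
  end.

Definition gib (a b : Z) (n : nat) : Z := fst (gib_pair a b (Nat.pred n)).

Definition complete_mod (G : nat -> Z) (m : Z) : Prop :=
  forall r : Z, exists n : nat, (1 <= n)%nat /\ G n mod m = r mod m.

(* Represent x + yφ ∈ Z[φ] (φ² = φ + 1) by the pair (x, y); then φ^n = F_(n-1) + F_n φ,
   every Fibonacci-recurrent sequence satisfies s_(n+U) = F_(U-1) s_n + F_U s_(n+1), and
   "U is a period modulo d" means φ^U ≡ 1 (mod d).  Write m = 5^k m' with k ≥ 1, 5 ∤ m'.
   1. Completeness modulo m' forces a period V of m' with 5 ∤ V (period_prime_to_five).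
      At a prime p ∉ {2, 5}, Frobenius in F_p[X]/(X² − X − 1) and quadratic reciprocity
      for 5 (a Gauss sum of order 5) give the period p − 1 when p ≡ ±1 (mod 5), which a
      complete sequence cannot have, and the period 2p + 2 when p ≡ ±2 (mod 5); periods
      then combine along factorizations (period_lift).  This part uses polynomials over
      F_p from MathComp and is isolated in the module FibonacciModPrime.
   2. φ^(4·5^k) = 1 + 5^k Z with Z ≡ 1 + 3φ (mod 5) (phi_pow_five_adic), hence
      φ^(4·5^k·V) = 1 + m Q with m' Q ≡ V(1 + 3φ) (mod 5) (increment_at_period).
   3. Shifting by multiples j of U = 4·5^k·V gives G_(n+jU) ≡ G_n + j m T_n (mod m²),
      where T_n ≢ 0 (mod 5) because x² + xy − y² ≡ (x + 3y)(x − 2y) (mod 5) and the form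
      is ±(a² + ab − b²) along the sequence; choosing j modulo 5 reaches every residue
      modulo 5m (complete_lift). *)

From Stdlib Require Import ZArith Znumtheory Zpow_facts List Lia.
From mathcomp Require all_boot all_algebra ring zify.
Open Scope Z_scope.

(* The ring Z[φ], φ² = φ + 1; the pair (x, y) stands for x + y φ. *)
Definition zadd (u v : Z * Z) : Z * Z := (fst u + fst v, snd u + snd v).
Definition zscal (c : Z) (u : Z * Z) : Z * Z := (c * fst u, c * snd u).
Definition zmul (u v : Z * Z) : Z * Z :=
  (fst u * fst v + snd u * snd v, fst u * snd v + snd u * fst v + snd u * snd v).
Definition zone : Z * Z := (1, 0).

Fixpoint zpow (u : Z * Z) (n : nat) : Z * Z :=
  match n with O => zone | S k => zmul (zpow u k) u end.

(* φ^n = F_(n-1) + F_n φ, the Fibonacci matrix in disguise. *)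
Definition phi_pow (n : nat) : Z * Z := zpow (0, 1) n.

Ltac pair_ring :=
  repeat match goal with u : (Z * Z)%type |- _ => destruct u end;
  cbn [zpow]; unfold zadd, zscal, zmul, zone; cbn [fst snd]; f_equal; ring.

Lemma zmul_assoc u v w : zmul u (zmul v w) = zmul (zmul u v) w.
Proof. pair_ring. Qed.

Lemma zmul_comm u v : zmul u v = zmul v u.
Proof. pair_ring. Qed.

Lemma zmul_one_r u : zmul u zone = u.
Proof. pair_ring. Qed.

Lemma zmul_scal_l c u v : zmul (zscal c u) v = zscal c (zmul u v).
Proof. pair_ring. Qed.

Lemma zmul_scal_r c u v : zmul u (zscal c v) = zscal c (zmul u v).
Proof. pair_ring. Qed.

Lemma zscal_scal c c' u : zscal c (zscal c' u) = zscal (c * c') u.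
Proof. pair_ring. Qed.

Lemma zadd_one_inj D D' : zadd zone D = zadd zone D' -> D = D'.
Proof.
  destruct D, D'; intro E.
  pose proof (f_equal fst E); pose proof (f_equal snd E).
  unfold zadd, zone in *; cbn [fst snd] in *; f_equal; lia.
Qed.

Lemma zpow_add u n k : zpow u (n + k) = zmul (zpow u n) (zpow u k).
Proof.
  induction k as [|k IH]; cbn [zpow].
  - rewrite Nat.add_0_r, zmul_one_r; reflexivity.
  - rewrite Nat.add_succ_r; cbn [zpow]; rewrite IH, zmul_assoc; reflexivity.
Qed.

Lemma zpow_mul u n k : zpow u (n * k) = zpow (zpow u n) k.
Proof.
  induction k as [|k IH]; cbn [zpow].
  - rewrite Nat.mul_0_r; reflexivity.
  - rewrite Nat.mul_succ_r, zpow_add, IH; reflexivity.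
Qed.

Lemma zpow_one_plus D n : exists S,
  zpow (zadd zone D) n = zadd zone (zadd (zscal (Z.of_nat n) D) (zmul (zmul D D) S)).
Proof.
  induction n as [|n [S IH]].
  - exists (0, 0); pair_ring.
  - exists (zadd (zscal (Z.of_nat n) zone) (zadd S (zmul D S))).
    cbn [zpow]; rewrite IH, Nat2Z.inj_succ; pair_ring.
Qed.

Lemma zpow5 u : zpow (zadd zone u) 5 =
  zadd zone (zadd (zscal 5 u) (zmul (zmul u u) (zadd (zscal 10 zone) (zadd (zscal 10 u)
    (zadd (zscal 5 (zmul u u)) (zmul u (zmul u u))))))).
Proof. pair_ring. Qed.

Lemma zpow_quintic e Z0 : exists W,
  zpow (zadd zone (zscal (5 * e) Z0)) 5 = zadd zone (zscal (25 * e) (zadd Z0 (zscal 5 W))).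
Proof.
  rewrite zpow5.
  set (u2 := zmul Z0 Z0).
  exists (zscal e (zmul u2 (zadd (zscal 2 zone) (zadd (zscal (10 * e) Z0)
    (zadd (zscal (25 * e * e) u2) (zscal (25 * e * e * e) (zmul Z0 u2))))))).
  unfold u2; pair_ring.
Qed.

Definition dvd2 (d : Z) (u : Z * Z) : Prop := (d | fst u) /\ (d | snd u).

Lemma dvd2_add d u v : dvd2 d u -> dvd2 d v -> dvd2 d (zadd u v).
Proof. intros [? ?] [? ?]; split; apply Z.divide_add_r; assumption. Qed.

Lemma dvd2_scal d c u : dvd2 d u -> dvd2 d (zscal c u).
Proof. intros [? ?]; split; apply Z.divide_mul_r; assumption. Qed.

Lemma dvd2_scal_self c u : dvd2 c (zscal c u).
Proof. split; apply Z.divide_factor_l. Qed.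

Lemma dvd2_scal_mul d c u : dvd2 d u -> dvd2 (c * d) (zscal c u).
Proof. intros [? ?]; split; apply Z.mul_divide_mono_l; assumption. Qed.

Lemma dvd2_mul d e u v : dvd2 d u -> dvd2 e v -> dvd2 (d * e) (zmul u v).
Proof.
  destruct u as [x y], v as [z w]; unfold dvd2; cbn [fst snd].
  intros [[x' ->] [y' ->]] [[z' ->] [w' ->]].
  split; cbn [zmul fst snd].
  - exists (x' * z' + y' * w'); ring.
  - exists (x' * w' + y' * z' + y' * w'); ring.
Qed.

Lemma dvd2_mul_r d u v : dvd2 d u -> dvd2 d (zmul u v).
Proof.
  intro H; rewrite <- (Z.mul_1_r d); apply dvd2_mul; [assumption|].
  split; apply Z.divide_1_l.
Qed.

Lemma dvd2_cancel d c R : rel_prime d c -> dvd2 d (zscal c R) -> exists Q, R = zscal d Q.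
Proof.
  intros Hcop [H1 H2]; apply Gauss in H1, H2; try assumption.
  destruct R as [x y], H1 as [q1 Hq1], H2 as [q2 Hq2]; cbn [fst snd] in *.
  exists (q1, q2); unfold zscal; cbn [fst snd]; f_equal; lia.
Qed.

Definition period (d : Z) (U : nat) : Prop :=
  exists D, phi_pow U = zadd zone D /\ dvd2 d D.

Lemma period_mul d U k : period d U -> period d (U * k).
Proof.
  intros [D [E HD]]; unfold period, phi_pow in *.
  destruct (zpow_one_plus D k) as [S ES].
  rewrite zpow_mul, E, ES; eexists; split; [reflexivity|].
  apply dvd2_add; [apply dvd2_scal | apply dvd2_mul_r, dvd2_mul_r]; assumption.
Qed.

(* If U is a period modulo d and modulo e, then U e is one modulo d e:
   (1 + D)^e = 1 + e D + D² S with d and e dividing D. *)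
Lemma period_lift d (e : nat) U :
  period d U -> period (Z.of_nat e) U -> period (d * Z.of_nat e) (U * e).
Proof.
  intros [D [E Hd]] [D' [E' He]].
  rewrite E in E'; apply zadd_one_inj in E'; subst D'.
  destruct (zpow_one_plus D e) as [S ES]; unfold period, phi_pow in *.
  rewrite zpow_mul, E, ES; eexists; split; [reflexivity|].
  apply dvd2_add.
  - rewrite Z.mul_comm; apply dvd2_scal_mul; assumption.
  - apply dvd2_mul_r, dvd2_mul; assumption.
Qed.

Definition fib_rec (s : nat -> Z) : Prop := forall n, s (S (S n)) = s n + s (S n).

(* The linear form D ↦ D₁ s_n + D₂ s_(n+1); φ^U acts on recurrent sequences
   through it (fib_rec_shift). *)
Definition lin (D : Z * Z) (s : nat -> Z) (n : nat) : Z := fst D * s n + snd D * s (S n).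

Lemma lin_add D E s n : lin (zadd D E) s n = lin D s n + lin E s n.
Proof. unfold lin, zadd; cbn [fst snd]; ring. Qed.

Lemma lin_scal c D s n : lin (zscal c D) s n = c * lin D s n.
Proof. unfold lin, zscal; cbn [fst snd]; ring. Qed.

Lemma lin_one s n : lin zone s n = s n.
Proof. unfold lin, zone; cbn [fst snd]; ring. Qed.

Lemma lin_dvd d D s n : dvd2 d D -> (d | lin D s n).
Proof. intros [? ?]; apply Z.divide_add_r; apply Z.divide_mul_l; assumption. Qed.

Lemma fib_rec_shift s U n : fib_rec s -> s (n + U)%nat = lin (phi_pow U) s n.
Proof.
  intro Hs; revert n; induction U as [|U IH]; intro n.
  - rewrite Nat.add_0_r; unfold lin, phi_pow, zpow, zone; cbn [fst snd]; ring.
  - rewrite Nat.add_succ_r, <- Nat.add_succ_l, IH.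
    unfold phi_pow, lin; cbn [zpow]; destruct (zpow (0, 1) U) as [x y].
    unfold zmul; cbn [fst snd]; rewrite Hs; ring.
Qed.

Lemma period_shift d U s j n : fib_rec s -> period d U -> (d | s (n + U * j)%nat - s n).
Proof.
  intros Hs HU; destruct (period_mul d U j HU) as [D [E HD]].
  rewrite (fib_rec_shift s _ n Hs), E, lin_add, lin_one.
  replace (s n + lin D s n - s n) with (lin D s n) by ring.
  apply lin_dvd; assumption.
Qed.

Lemma shift_expansion s U m Q j n : fib_rec s -> phi_pow U = zadd zone (zscal m Q) ->
  exists E, s (n + U * j)%nat = s n + Z.of_nat j * m * lin Q s n + m * m * E.
Proof.
  intros Hs HU; destruct (zpow_one_plus (zscal m Q) j) as [S ES].
  exists (lin (zmul (zmul Q Q) S) s n).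
  rewrite (fib_rec_shift s _ n Hs); unfold phi_pow; rewrite zpow_mul.
  fold (phi_pow U); rewrite HU, ES, !zmul_scal_l, zmul_scal_r, zmul_scal_l.
  rewrite !lin_add, !lin_scal, lin_one; ring.
Qed.

Definition gseq (a b : Z) (n : nat) : Z := gib a b (S n).

Lemma gseq_rec a b : fib_rec (gseq a b).
Proof. intro n; unfold gseq, gib; cbn; destruct (gib_pair a b n); reflexivity. Qed.

Lemma complete_dvd G m d : (d | m) -> complete_mod G m -> complete_mod G d.
Proof.
  intros Hd Hc r; destruct (Hc r) as [n [Hn E]]; exists n; split; [assumption|].
  apply Z.cong_iff_ex in E; apply Z.cong_iff_ex; eapply Z.divide_trans; eassumption.
Qed.

(* A period U < p leaves at most U residues modulo p for the sequence. *)
Lemma short_period_incomplete a b p U :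
  (1 <= U)%nat -> Z.of_nat U < p -> period p U -> ~ complete_mod (gib a b) p.
Proof.
  intros HU HUp HP Hc.
  assert (Hincl : incl (seq 0 (Z.to_nat p))
                       (map (fun i => Z.to_nat (gseq a b i mod p)) (seq 0 U))).
  { intros r Hr; apply in_seq in Hr.
    destruct (Hc (Z.of_nat r)) as [n [Hn E]].
    apply in_map_iff; exists ((n - 1) mod U)%nat; split.
    - assert (Hper := period_shift p U (gseq a b) ((n - 1) / U) ((n - 1) mod U)
                                   (gseq_rec a b) HP).
      apply Z.cong_iff_ex in Hper.
      replace ((n - 1) mod U + U * ((n - 1) / U))%nat with (n - 1)%nat in Hper
        by (rewrite (Nat.div_mod_eq (n - 1) U) at 1; lia).
      unfold gseq in Hper |- *; rewrite <- Hper.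
      replace (S (n - 1)) with n by lia; rewrite E, Z.mod_small by lia; lia.
    - apply in_seq; split; [lia|]; apply Nat.mod_upper_bound; lia. }
  apply NoDup_incl_length in Hincl; [|apply seq_NoDup].
  rewrite length_map, !length_seq in Hincl; lia.
Qed.

(* The lifting step. If φ^U = 1 + m Q and q ∤ (Q·G)_n for all n, then shifting a
   term hitting r modulo m by U j moves it by j m (Q·G)_n modulo m², and a suitable
   j ∈ [0, q) hits r modulo q m. *)
Lemma complete_lift a b q m U Q : prime q -> (q | m) -> phi_pow U = zadd zone (zscal m Q) ->
  (forall n, ~ (q | lin Q (gseq a b) n)) ->
  complete_mod (gib a b) m -> complete_mod (gib a b) (q * m).
Proof.
  intros Hq [m1 Hm1] HU HT Hc r.
  destruct (Hc r) as [n [Hn E]]; apply Z.cong_iff_ex in E as [w Hw].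
  set (N := (n - 1)%nat); set (T := lin Q (gseq a b) N).
  assert (Hg : gseq a b N = gib a b n) by (unfold gseq, N; f_equal; lia).
  destruct (rel_prime_bezout T q) as [u v Huv].
  { apply rel_prime_sym, prime_rel_prime, HT; assumption. }
  pose proof (prime_ge_2 q Hq).
  set (j := (u * - w) mod q).
  assert (Hj : 0 <= j) by (apply Z.mod_pos_bound; lia).
  destruct (shift_expansion (gseq a b) U m Q (Z.to_nat j) N (gseq_rec a b) HU) as [e He].
  exists (S (N + U * Z.to_nat j)); split; [lia|]; apply Z.cong_iff_ex.
  exists (w * v - (u * - w / q) * T + m1 * e).
  change (gib a b (S (N + U * Z.to_nat j))) with (gseq a b (N + U * Z.to_nat j)).
  rewrite He, Z2Nat.id, Hg by assumption; fold T.
  assert (Ej : j = u * - w - q * (u * - w / q)) by (apply Z.mod_eq; lia).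
  assert (Ew : w + j * T = q * (w * v - (u * - w / q) * T)).
  { rewrite Ej; transitivity (w * (1 - u * T) - q * (u * - w / q) * T); [ring|].
    replace (1 - u * T) with (v * q) by lia; ring. }
  rewrite Hm1 in *.
  replace (gib a b n) with (r + w * (m1 * q)) by lia.
  replace (r + w * (m1 * q) + j * (m1 * q) * T + m1 * q * (m1 * q) * e - r)
    with (m1 * q * (w + j * T) + m1 * q * (m1 * q) * e) by ring.
  rewrite Ew; ring.
Qed.

Module FibonacciModPrime.
Import all_boot all_algebra ring zify.
Import GRing.Theory.
Local Open Scope ring_scope.
Local Set Implicit Arguments.
Local Unset Strict Implicit.

(* The pair (F_(n-1), F_n) of natural numbers, with F_(-1) = 1. *)
Fixpoint fib_nat (n : nat) : nat * nat :=
  match n with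
  | O => (1, 0)%N
  | S k => ((fib_nat k).2, (fib_nat k).1 + (fib_nat k).2)%N
  end.

Section FibonacciPolynomials.
Variable F : fieldType.
Implicit Types d a b c : {poly F}.

Definition cong d a b : bool := d %| a - b.

Lemma cong_refl d a : cong d a a.
Proof. by rewrite /cong subrr dvdp0. Qed.

Lemma cong_sym d a b : cong d a b -> cong d b a.
Proof. by rewrite /cong -opprB dvdpNr. Qed.

Lemma cong_trans d a b c : cong d a b -> cong d b c -> cong d a c.
Proof. by move=> hab hbc; rewrite /cong (_ : a - c = (a - b) + (b - c)); [exact: dvdp_add | ring]. Qed.

Lemma cong_add d a b a' b' : cong d a b -> cong d a' b' -> cong d (a + a') (b + b').
Proof. by move=> h h'; rewrite /cong (_ : _ - _ = (a - b) + (a' - b')); [exact: dvdp_add | ring]. Qed.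

Lemma cong_sub d a b a' b' : cong d a b -> cong d a' b' -> cong d (a - a') (b - b').
Proof. by move=> h h'; rewrite /cong (_ : _ - _ = (a - b) - (a' - b')); [exact: dvdp_sub | ring]. Qed.

Lemma cong_mul d a b a' b' : cong d a b -> cong d a' b' -> cong d (a * a') (b * b').
Proof.
move=> h h'; rewrite /cong (_ : _ - _ = a' * (a - b) + b * (a' - b')); last by ring.
by apply: dvdp_add; apply: dvdp_mull.
Qed.

Lemma cong_pow d a b n : cong d a b -> cong d (a ^+ n) (b ^+ n).
Proof.
move=> h; elim: n => [|n IH]; first exact: cong_refl.
by rewrite !exprS; apply: cong_mul.
Qed.

Lemma cong0_small d a : d != 0 -> (size a < size d)%N -> cong d a 0 -> a = 0.
Proof.
rewrite /cong subr0 => dn0 ha hd; apply/eqP; apply: contraTT ha => an0.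
by rewrite -leqNgt; apply: dvdp_leq.
Qed.

(* The minimal polynomial of φ; F[X]/(X² − X − 1) plays the role of Z[φ] mod p. *)
Definition phi_poly : {poly F} := 'X^2 - 'X - 1.

Lemma size_phi_poly : size phi_poly = 3%N.
Proof.
rewrite (_ : phi_poly = 'X^2 + - ('X + 1%:P)); last by rewrite /phi_poly polyC1; ring.
by rewrite size_polyDl ?size_polyXn // size_polyN size_XaddC.
Qed.

Lemma phi_poly_neq0 : phi_poly != 0.
Proof. by rewrite -size_poly_eq0 size_phi_poly. Qed.

Lemma X_pow_phi n : cong phi_poly ('X^n) ((fib_nat n).1%:R + (fib_nat n).2%:R * 'X).
Proof.
elim: n => [|n IH] /=; first by rewrite expr0 mul0r addr0; apply: cong_refl.
rewrite /cong (_ : _ - _ = 'X * ('X^n - ((fib_nat n).1%:R + (fib_nat n).2%:R * 'X))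
                           + (fib_nat n).2%:R * phi_poly).
  by apply: dvdp_add; [apply: dvdp_mull | apply: dvdp_mull; apply: dvdpp].
by rewrite exprS natrD /phi_poly; ring.
Qed.

Lemma X_pow_phi_one U : cong phi_poly ('X^U) 1 ->
  (fib_nat U).1%:R = 1 :> F /\ (fib_nat U).2%:R = 0 :> F.
Proof.
move=> hU; set x : F := (fib_nat U).1%:R - 1; set y : F := (fib_nat U).2%:R.
have hxy : cong phi_poly (y%:P * 'X + x%:P) 0.
  have := cong_trans (cong_sym (X_pow_phi U)) hU.
  by rewrite /cong subr0 (_ : _ - _ = y%:P * 'X + x%:P) // /x /y polyCB polyC1 !polyC_natr; ring.
have /(congr1 (fun q : {poly F} => (q`_0, q`_1))) : y%:P * 'X + x%:P = 0.
  apply: cong0_small hxy; first exact: phi_poly_neq0.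
  rewrite size_phi_poly size_MXaddC; case: ifP => // _.
  by rewrite ltnS; apply: leq_trans (size_polyC_leq1 y) _.
rewrite /= !coefD !coefMX !coefC /= add0r addr0.
by case=> /eqP hx ->; split => //; apply/eqP; rewrite -subr_eq0.
Qed.

(* The Gauss sum ζ − ζ² − ζ³ + ζ⁴ of the fifth roots of unity: its square is 5. *)
Definition cyclo5 : {poly F} := 'X^5 - 1.
Definition trace5 : {poly F} := 1 + 'X + 'X^2 + 'X^3 + 'X^4.
Definition gauss5 : {poly F} := 'X - 'X^2 - 'X^3 + 'X^4.

Lemma size_cyclo5 : size cyclo5 = 6%N.
Proof. by rewrite /cyclo5 -polyC1 size_XnsubC. Qed.

Lemma X_pow_mod5 n : cong cyclo5 ('X^n) ('X^(n %% 5)).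
Proof.
rewrite {1}(divn_eq n 5) exprD mulnC exprM -{2}(mul1r ('X^(n %% 5))).
apply: cong_mul; last exact: cong_refl.
rewrite -(expr1n _ (n %/ 5)); apply: cong_pow.
by rewrite /cong /cyclo5 dvdpp.
Qed.

(* g³ = 5g, from g² ≡ 5 − (1 + X + … + X⁴) and g (1 + X + … + X⁴) ≡ 0. *)
Lemma gauss5_cube : cong cyclo5 (gauss5 ^+ 3) (5%:R * gauss5).
Proof.
have hsq : cong cyclo5 (gauss5 ^+ 2) (5%:R - trace5).
  by apply/dvdpP; exists (4%:R - 'X - 2%:R * 'X^2 + 'X^3); rewrite /gauss5 /trace5 /cyclo5; ring.
have htr : cong cyclo5 (gauss5 * trace5) 0.
  by apply/dvdpP; exists ('X * ('X - 1) * ('X + 1)); rewrite /gauss5 /trace5 /cyclo5; ring.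
rewrite (_ : gauss5 ^+ 3 = gauss5 * gauss5 ^+ 2); last by ring.
apply: cong_trans (cong_mul (cong_refl _ gauss5) hsq) _.
rewrite (_ : gauss5 * (5%:R - trace5) = 5%:R * gauss5 - gauss5 * trace5); last by ring.
by rewrite -{2}(subr0 (5%:R * gauss5)); apply: cong_sub; [apply: cong_refl | ].
Qed.

Lemma gauss5_odd_pow k : cong cyclo5 (gauss5 ^+ k.*2.+1) ((5%:R : {poly F}) ^+ k * gauss5).
Proof.
elim: k => [|k IH]; first by rewrite expr1 expr0 mul1r; apply: cong_refl.
rewrite (_ : gauss5 ^+ _ = gauss5 ^+ k.*2.+1 * gauss5 ^+ 2); last first.
  by rewrite doubleS -exprD addn2.
apply: cong_trans (cong_mul IH (cong_refl _ _)) _.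
rewrite (_ : _ * gauss5 * _ = (5%:R : {poly F}) ^+ k * gauss5 ^+ 3); last by ring.
rewrite (_ : _ ^+ k.+1 * _ = (5%:R : {poly F}) ^+ k * (5%:R * gauss5)); last first.
  by rewrite exprS; ring.
exact: cong_mul (cong_refl _ _) gauss5_cube.
Qed.

Section Frobenius.
Variable p : nat.
Hypothesis charFp : p \in [pchar F].
Hypothesis p_odd : odd p.
Hypothesis five_neq0 : (5%:R : F) != 0.

Lemma frobD (a b : {poly F}) : (a + b) ^+ p = a ^+ p + b ^+ p.
Proof.
have hp : p \in [pchar {poly F}] by rewrite pchar_poly.
by rewrite -!(pFrobenius_autE hp) pFrobenius_autD_comm // /GRing.comm mulrC.
Qed.

Lemma frobB (a b : {poly F}) : (a - b) ^+ p = a ^+ p - b ^+ p.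
Proof.
have hp : p \in [pchar {poly F}] by rewrite pchar_poly.
by rewrite -!(pFrobenius_autE hp) pFrobenius_autB_comm // /GRing.comm mulrC.
Qed.

Lemma frob_nat n : (n%:R : {poly F}) ^+ p = n%:R.
Proof.
have hp : p \in [pchar {poly F}] by rewrite pchar_poly.
by rewrite -(pFrobenius_autE hp) pFrobenius_aut_nat.
Qed.

Lemma gauss5_frobenius : (p %% 5 = 1 \/ p %% 5 = 4)%N -> cong cyclo5 (gauss5 ^+ p) gauss5.
Proof.
move=> hp.
have hX i : cong cyclo5 (('X^i) ^+ p) ('X^((i * (p %% 5)) %% 5)).
  by rewrite -exprM modnMmr; apply: X_pow_mod5.
rewrite /gauss5 frobD !frobB -{1}(expr1 'X).
have := cong_add (cong_sub (cong_sub (hX 1%N) (hX 2%N)) (hX 3%N)) (hX 4%N).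
by case: hp => -> /= h; apply: (cong_trans h); rewrite /cong (_ : _ - _ = 0) ?dvdp0 //; ring.
Qed.

Lemma p_half : p = (p./2).*2.+1.
Proof. by rewrite -{1}(odd_double_half p) p_odd add1n. Qed.

Definition euler5 : F := 5%:R ^+ p./2.

Lemma euler5_sign : euler5 = 1 \/ euler5 = -1.
Proof.
have h5p := pFrobenius_aut_nat charFp 5; rewrite pFrobenius_autE p_half exprS in h5p.
have sq : euler5 ^+ 2 = 1.
  by apply: (mulIf five_neq0); rewrite mul1r -{2}h5p /euler5 -exprM -muln2 mulrC.
have : (euler5 - 1) * (euler5 + 1) = 0 by rewrite -subr_sqr sq expr1n subrr.
by move/eqP; rewrite mulf_eq0 subr_eq0 addr_eq0 => /orP [] /eqP; [left | right].
Qed.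

Lemma euler5_residue : (p %% 5 = 1 \/ p %% 5 = 4)%N -> euler5 = 1.
Proof.
move=> hp.
have hodd : cong cyclo5 (gauss5 ^+ p) (euler5%:P * gauss5).
  by rewrite {1}p_half /euler5 rmorphXn /= polyC_natr; apply: gauss5_odd_pow.
have h0 : cong cyclo5 ((euler5 - 1)%:P * gauss5) 0.
  have := cong_trans (cong_sym hodd) (gauss5_frobenius hp).
  by rewrite /cong subr0 polyCB polyC1 (_ : _ - _ = (euler5%:P - 1) * gauss5) //; ring.
have {h0} : (euler5 - 1)%:P * gauss5 = 0.
  apply: cong0_small h0; first by rewrite -size_poly_eq0 size_cyclo5.
  rewrite size_cyclo5; apply: leq_ltn_trans (size_polyMleq _ _) _.
  have sg : (size gauss5 <= 5)%N.
    rewrite /gauss5; apply: (leq_trans (size_polyD _ _)); rewrite geq_max size_polyXn andbT.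
    apply: (leq_trans (size_polyD _ _)); rewrite geq_max size_polyN size_polyXn andbT.
    apply: (leq_trans (size_polyD _ _)); rewrite geq_max size_polyN size_polyXn andbT.
    by rewrite size_polyX.
  by have := size_polyC_leq1 (euler5 - 1); lia.
move/eqP; rewrite mulf_eq0 polyC_eq0 subr_eq0 => /orP [/eqP // | /eqP hg].
have := congr1 (fun q : {poly F} => q`_1) hg.
by rewrite /gauss5 /= !coefD !coefN !coefXn coefX /= coef0 !subr0 addr0 => /eqP; rewrite oner_eq0.
Qed.

Lemma two_neq0 : (2%:R : F) != 0.
Proof.
apply/negP => /eqP h; have : (p %| 2)%N by rewrite (dvdn_pcharf charFp) h.
rewrite dvdn_prime2 ?(pcharf_prime charFp) // => /eqP e; by move: p_odd; rewrite e.
Qed.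

(* √5 = 2X − 1 modulo X² − X − 1, and Frobenius sends it to euler5 · √5. *)
Lemma sqrt5_frobenius : cong phi_poly (2%:R * 'X ^+ p - 1) (euler5%:P * (2%:R * 'X - 1)).
Proof.
set s : {poly F} := 2%:R * 'X - 1.
have -> : 2%:R * 'X ^+ p - 1 = s ^+ p by rewrite /s frobB exprMn frob_nat expr1n.
have hs : cong phi_poly (s ^+ 2) 5%:R by apply/dvdpP; exists 4%:R; rewrite /s /phi_poly; ring.
rewrite {1}p_half exprS -mul2n exprM mulrC /euler5 rmorphXn /= polyC_natr.
exact: cong_mul (cong_pow _ hs) (cong_refl _ _).
Qed.

Lemma halve a b : cong phi_poly (2%:R * a - 1) (2%:R * b - 1) -> cong phi_poly a b.
Proof.
rewrite /cong => h.
rewrite (_ : a - b = (2%:R^-1)%:P * (2%:R * a - 1 - (2%:R * b - 1))); first exact: dvdp_mull.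
rewrite (_ : 2%:R * a - 1 - _ = 2%:R * (a - b)); last by ring.
by rewrite mulrA -polyC_natr -polyCM mulVf ?two_neq0 // mul1r.
Qed.

Lemma fib_period_char :
  ((fib_nat p.-1).1%:R = 1 :> F /\ (fib_nat p.-1).2%:R = 0 :> F) \/
  ((p %% 5 = 2 \/ p %% 5 = 3)%N /\
   ((fib_nat (p.*2 + 2)).1%:R = 1 :> F /\ (fib_nat (p.*2 + 2)).2%:R = 0 :> F)).
Proof.
have hs := sqrt5_frobenius.
have hpX : 'X ^+ p = 'X * 'X ^+ p.-1 :> {poly F} by rewrite -exprS prednK // odd_gt0.
case: euler5_sign => he; rewrite he in hs.
- left; apply: X_pow_phi_one.
  have {hs} /halve hXp : cong phi_poly (2%:R * 'X ^+ p - 1) (2%:R * 'X - 1) by rewrite polyC1 mul1r in hs.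
  rewrite /cong (_ : _ - _ = ('X - 1) * ('X ^+ p - 'X) - ('X ^+ p.-1 - 1) * phi_poly).
    by apply: dvdp_sub; [apply: dvdp_mull | apply: dvdp_mull; apply: dvdpp].
  by rewrite hpX /phi_poly; ring.
- right; split.
    have hp5 : (p %% 5 != 0)%N.
      apply/eqP => h0; have : (5 %| p)%N by apply/eqP.
      rewrite dvdn_prime2 ?(pcharf_prime charFp) // => /eqP e.
      by move: five_neq0; rewrite e (pcharf0 charFp) eqxx.
    have hlt : (p %% 5 < 5)%N by rewrite ltn_pmod.
    have h14 : ~ (p %% 5 = 1 \/ p %% 5 = 4)%N.
      move/euler5_residue; rewrite he => e.
      by move: two_neq0; rewrite mulr2n -{1}e addNr eqxx.
    lia.
  apply: X_pow_phi_one.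
  have {hs} /halve hXp : cong phi_poly (2%:R * 'X ^+ p - 1) (2%:R * (1 - 'X) - 1).
    by rewrite (_ : _ * (1 - 'X) - 1 = (-1)%:P * (2%:R * 'X - 1)) // polyCN polyC1; ring.
  have hXp1 : cong phi_poly ('X ^+ p * 'X) (-1).
    rewrite /cong (_ : _ - _ = ('X ^+ p - (1 - 'X)) * 'X - phi_poly).
      by apply: dvdp_sub; [apply: dvdp_mulr | apply: dvdpp].
    by rewrite /phi_poly; ring.
  rewrite (_ : 'X^(p.*2 + 2) = ('X ^+ p * 'X) ^+ 2); last first.
    by rewrite -exprSr -exprM; congr (_ ^+ _); lia.
  by rewrite -[1](expr1n _ 2) -(sqrrN 1); apply: cong_pow.
Qed.
End Frobenius.

End FibonacciPolynomials.
Local Close Scope ring_scope.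

Lemma phi_pow_fib_nat n : phi_pow n = (Z.of_nat (fib_nat n).1, Z.of_nat (fib_nat n).2).
Proof.
elim: n => [// | n IH]; rewrite /phi_pow /= -/(phi_pow n) IH /zmul /=.
by f_equal; lia.
Qed.

Lemma period_of_fib_Fp (p U : nat) : prime p ->
  ((fib_nat U).1%:R = 1 :> 'F_p)%R -> ((fib_nat U).2%:R = 0 :> 'F_p)%R -> period (Z.of_nat p) U.
Proof.
move=> pr h1 h2; have hc := pchar_Fp pr.
have pos1 : (0 < (fib_nat U).1)%N.
  by move: h1; case: (fib_nat U).1 => // /eqP; rewrite eq_sym oner_eq0.
have /dvdnP [q1 hq1] : (p %| (fib_nat U).1 - 1)%N by rewrite (dvdn_pcharf hc) natrB // h1 subrr.
have /dvdnP [q2 hq2] : (p %| (fib_nat U).2)%N by rewrite (dvdn_pcharf hc) h2.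
exists (Z.of_nat (fib_nat U).1 - 1, Z.of_nat (fib_nat U).2); split.
  by rewrite phi_pow_fib_nat /zadd /zone; cbn [fst snd]; f_equal; lia.
by split; [exists (Z.of_nat q1) | exists (Z.of_nat q2)]; rewrite /=; nia.
Qed.

Lemma prime_of_Zprime (p : Z) : Znumtheory.prime p -> prime (Z.to_nat p).
Proof.
move=> hp; have p2 := Znumtheory.prime_ge_2 p hp.
apply/primeP; split; first lia.
move=> d /dvdnP [k hk].
have hd : (Z.of_nat d | p) by exists (Z.of_nat k); nia.
by case: (Znumtheory.prime_divisors p hp _ hd) => [|[|[|]]]; lia.
Qed.

Lemma period_mod_prime (p : Z) : Znumtheory.prime p -> p <> 5 ->
  period p (Z.to_nat p - 1) \/ exists V, ~ (5 | Z.of_nat V) /\ period p V.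
Proof.
move=> hpZ h5; have pr := prime_of_Zprime hpZ.
have [n En] : exists n, p = Z.of_nat n by exists (Z.to_nat p); have := Znumtheory.prime_ge_2 p hpZ; lia.
subst p; rewrite Nat2Z.id in pr *.
case: (even_prime pr) => [n2 | nodd].
  right; exists 3%N; rewrite n2; split; first by move=> [k hk]; lia.
  by exists (0, 2); split; [ | split; [exists 0 | exists 1]].
have hc := pchar_Fp pr.
have h5F : (5%:R : 'F_n)%R != 0%R.
  by rewrite -(dvdn_pcharf hc) dvdn_prime2 //; apply/eqP; lia.
case: (fib_period_char hc nodd h5F) => [[a1 a2] | [hm [a1 a2]]].
  by left; rewrite subn1; apply: period_of_fib_Fp.
right; exists (n.*2 + 2)%N; split; last exact: period_of_fib_Fp.
by move=> [k hk]; rewrite -mul2n in hk; lia.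
Qed.

End FibonacciModPrime.

Lemma prime5 : prime 5.
Proof.
  apply prime_intro; [lia|]; intros n Hn; apply Zgcd_1_rel_prime.
  assert (n = 1 \/ n = 2 \/ n = 3 \/ n = 4) as [-> | [-> | [-> | ->]]] by lia; reflexivity.
Qed.

Lemma not_dvd5_mul x y : ~ (5 | x) -> ~ (5 | y) -> ~ (5 | x * y).
Proof. intros Hx Hy H; destruct (prime_mult 5 prime5 x y H); contradiction. Qed.

(* Completeness modulo m with 5 ∤ m forces a period of m prime to 5: a prime
   factor p ≡ ±1 (mod 5) would have the short period p − 1, and periods
   combine along factorizations (period_lift). *)
Lemma period_prime_to_five a b m : 1 <= m -> ~ (5 | m) -> complete_mod (gib a b) m ->
  exists V, ~ (5 | Z.of_nat V) /\ period m V.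
Proof.
  intro Hm; generalize Hm; pattern m; apply Z_lt_induction; [clear m Hm | lia].
  intros m IH Hm H5 Hc.
  destruct (Z.eq_dec m 1) as [-> | Hm1].
  { exists 1%nat; split; [intros [k Hk]; lia|].
    exists (-1, 1); split; [reflexivity | split; apply Z.divide_1_l]. }
  destruct (prime_dec m) as [Hp | Hnp].
  - destruct (FibonacciModPrime.period_mod_prime Hp) as [HP | HV];
      [intros ->; apply H5, Z.divide_refl | | assumption].
    exfalso; apply (short_period_incomplete a b m (Z.to_nat m - 1)); [lia | lia | assumption..].
  - destruct (not_prime_divide m) as [d [Hd [e He]]]; [lia | assumption|].
    assert (H5d : ~ (5 | d)) by (intro H; apply H5; rewrite He; apply Z.divide_mul_r, H).
    assert (H5e : ~ (5 | e)) by (intro H; apply H5; rewrite He; apply Z.divide_mul_l, H).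
    destruct (IH d ltac:(lia) ltac:(lia) H5d) as [Vd [HVd HPd]];
      [apply (complete_dvd _ m); [exists e; lia | assumption]|].
    destruct (IH e ltac:(nia) ltac:(nia) H5e) as [Ve [HVe HPe]];
      [apply (complete_dvd _ m); [exists d; lia | assumption]|].
    exists (Vd * Ve * Z.to_nat e)%nat; split.
    + rewrite !Nat2Z.inj_mul, Z2Nat.id by nia; repeat apply not_dvd5_mul; assumption.
    + replace m with (d * Z.of_nat (Z.to_nat e)) by (rewrite Z2Nat.id by nia; lia).
      apply period_lift; [apply period_mul | rewrite Z2Nat.id by nia; rewrite Nat.mul_comm];
        [assumption | apply period_mul; assumption].
Qed.

Lemma split_five_power m : 1 <= m -> exists k m', m = 5 ^ Z.of_nat k * m' /\ 1 <= m' /\ ~ (5 | m').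
Proof.
  intro Hm; generalize Hm; pattern m; apply Z_lt_induction; [clear m Hm; intros m IH Hm | lia].
  destruct (Zdivide_dec 5 m) as [[q Hq] | Hn].
  - destruct (IH q ltac:(lia) ltac:(lia)) as [k [m' [E [H1 H2]]]].
    exists (S k), m'; split; [|split; assumption].
    rewrite Hq, E, Nat2Z.inj_succ, Z.pow_succ_r by lia; ring.
  - exists 0%nat, m; split; [cbn [Z.of_nat]; rewrite Z.pow_0_r; ring | split; assumption].
Qed.

Lemma phi_pow_five_adic k : (1 <= k)%nat -> exists Z0,
  phi_pow (4 * 5 ^ k) = zadd zone (zscal (5 ^ Z.of_nat k) Z0) /\ dvd2 5 (zadd Z0 (-1, -3)).
Proof.
  induction k as [|k IH]; intro Hk; [lia|].
  destruct (Nat.eq_dec k 0) as [->|Hk0].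
  - exists (836, 1353); split; [vm_compute; reflexivity|].
    split; [exists 167 | exists 270]; reflexivity.
  - destruct IH as [Z0 [E HZ0]]; [lia|].
    destruct (zpow_quintic (5 ^ (Z.of_nat k - 1)) Z0) as [W EW].
    exists (zadd Z0 (zscal 5 W)); split.
    + replace (4 * 5 ^ S k)%nat with (4 * 5 ^ k * 5)%nat by (cbn; lia).
      unfold phi_pow; rewrite zpow_mul; fold (phi_pow (4 * 5 ^ k)); rewrite E.
      replace (5 ^ Z.of_nat k) with (5 * 5 ^ (Z.of_nat k - 1))
        by (rewrite <- Z.pow_succ_r by lia; f_equal; lia).
      rewrite EW; f_equal; f_equal.
      rewrite Nat2Z.inj_succ; replace (Z.succ (Z.of_nat k)) with (2 + (Z.of_nat k - 1)) by lia.
      rewrite Z.pow_add_r by lia; reflexivity.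
    + replace (zadd (zadd Z0 (zscal 5 W)) (-1, -3)) with (zadd (zadd Z0 (-1, -3)) (zscal 5 W))
        by pair_ring.
      apply dvd2_add; [assumption | apply dvd2_scal_self].
Qed.

Lemma increment_at_period k m' V : (1 <= k)%nat -> ~ (5 | m') -> period m' V ->
  exists Q, phi_pow (4 * 5 ^ k * V) = zadd zone (zscal (5 ^ Z.of_nat k * m') Q) /\
            dvd2 5 (zadd (zscal m' Q) (zscal (- Z.of_nat V) (1, 3))).
Proof.
  intros Hk H5 HV.
  destruct (phi_pow_five_adic k Hk) as [Z0 [E5 HZ0]].
  set (c := 5 ^ Z.of_nat k) in *.
  assert (Hc5 : (5 | c)).
  { unfold c; replace (Z.of_nat k) with (Z.succ (Z.of_nat k - 1)) by lia.
    rewrite Z.pow_succ_r by lia; apply Z.divide_factor_l. }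
  assert (Hcop : rel_prime m' c)
    by (apply rel_prime_Zpower_r; [lia | apply rel_prime_sym, prime_rel_prime, H5; exact prime5]).
  destruct (zpow_one_plus (zscal c Z0) V) as [S ES].
  set (R := zadd (zscal (Z.of_nat V) Z0) (zscal c (zmul (zmul Z0 Z0) S))).
  assert (EU : phi_pow (4 * 5 ^ k * V) = zadd zone (zscal c R)).
  { unfold phi_pow; rewrite zpow_mul; fold (phi_pow (4 * 5 ^ k)); rewrite E5, ES.
    unfold R; pair_ring. }
  destruct (period_mul m' V (4 * 5 ^ k) HV) as [D [ED HD]].
  rewrite Nat.mul_comm, EU in ED; apply zadd_one_inj in ED; subst D.
  destruct (dvd2_cancel m' c R Hcop HD) as [Q EQ].
  exists Q; split; [rewrite EU, EQ, zscal_scal; reflexivity|].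
  rewrite <- EQ.
  replace (zadd R (zscal (- Z.of_nat V) (1, 3))) with
    (zadd (zscal (Z.of_nat V) (zadd Z0 (-1, -3))) (zscal c (zmul (zmul Z0 Z0) S)))
    by (unfold R; pair_ring).
  apply dvd2_add; [apply dvd2_scal; assumption|].
  destruct Hc5 as [c' ->]; rewrite <- zscal_scal; apply dvd2_scal, dvd2_scal_self.
Qed.

(* The form x² + xy − y² (± the norm of x + yφ) changes sign along the recurrence. *)
Definition fnorm (x y : Z) : Z := x ^ 2 + x * y - y ^ 2.

Lemma fnorm_rec s n : fib_rec s ->
  fnorm (s n) (s (S n)) = fnorm (s 0%nat) (s 1%nat) \/
  fnorm (s n) (s (S n)) = - fnorm (s 0%nat) (s 1%nat).
Proof.
  intro Hs; induction n as [|n IH]; [left; reflexivity|].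
  assert (E : fnorm (s (S n)) (s (S (S n))) = - fnorm (s n) (s (S n)))
    by (unfold fnorm; rewrite Hs; ring).
  rewrite E; destruct IH as [-> | ->]; [right | left]; ring.
Qed.

(* Since x² + xy − y² ≡ (x + 3y)(x − 2y) (mod 5), the combination s_n + 3 s_(n+1)
   never vanishes mod 5 when the norm does not. *)
Lemma five_not_dvd_combination s n : fib_rec s -> ~ (5 | fnorm (s 0%nat) (s 1%nat)) ->
  ~ (5 | s n + 3 * s (S n)).
Proof.
  intros Hs Hnorm H; apply Hnorm.
  assert (Hn : (5 | fnorm (s n) (s (S n)))).
  { replace (fnorm (s n) (s (S n))) with
      ((s n + 3 * s (S n)) * (s n - 2 * s (S n)) + 5 * s (S n) ^ 2) by (unfold fnorm; ring).
    apply Z.divide_add_r; [apply Z.divide_mul_l; assumption | apply Z.divide_factor_l]. }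
  destruct (fnorm_rec s n Hs) as [E | E]; rewrite E in Hn; [assumption|].
  apply Z.divide_opp_r; assumption.
Qed.

Lemma increment_unit_mod5 s m' V Q n : fib_rec s -> ~ (5 | fnorm (s 0%nat) (s 1%nat)) ->
  ~ (5 | Z.of_nat V) -> dvd2 5 (zadd (zscal m' Q) (zscal (- Z.of_nat V) (1, 3))) ->
  ~ (5 | lin Q s n).
Proof.
  intros Hs Hnorm HV HQ H.
  apply (lin_dvd 5 _ s n) in HQ; rewrite lin_add, !lin_scal in HQ.
  assert (HVs : (5 | Z.of_nat V * lin (1, 3) s n)).
  { replace (Z.of_nat V * lin (1, 3) s n) with
      (m' * lin Q s n - (m' * lin Q s n + - Z.of_nat V * lin (1, 3) s n)) by ring.
    apply Z.divide_sub_r; [apply Z.divide_mul_r|]; assumption. }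
  destruct (prime_mult 5 prime5 _ _ HVs) as [H' | H']; [contradiction|].
  apply (five_not_dvd_combination s n Hs Hnorm).
  unfold lin in H'; cbn [fst snd] in H'; rewrite Z.mul_1_l in H'; assumption.
Qed.

Theorem mainTheorem18 (a b m : Z) :
  Z.gcd a b = 1 ->
  (a ^ 2 + a * b - b ^ 2) mod 5 <> 0 ->
  1 <= m ->
  (5 | m) ->
  complete_mod (gib a b) m ->
  complete_mod (gib a b) (5 * m).
Proof.
  intros _ Hnorm Hm H5m Hc.
  destruct (split_five_power m Hm) as [k [m' [Em [Hm' H5']]]].
  assert (Hk : (1 <= k)%nat).
  { destruct k; [|lia]; exfalso; apply H5'.
    rewrite Em in H5m; cbn [Z.of_nat] in H5m; rewrite Z.pow_0_r, Z.mul_1_l in H5m; assumption. }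
  destruct (period_prime_to_five a b m' Hm' H5') as [V [HV5 HV]].
  { apply (complete_dvd _ m); [rewrite Em; apply Z.divide_factor_r | assumption]. }
  destruct (increment_at_period k m' V Hk H5' HV) as [Q [EU HQ]].
  rewrite <- Em in EU.
  apply (complete_lift a b 5 m _ Q prime5 H5m EU); [|assumption].
  intro n; apply (increment_unit_mod5 (gseq a b) m' V Q n (gseq_rec a b)); [|assumption..].
  intro H; apply Hnorm, Z.mod_divide; [lia | exact H].
Qed.
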